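(* Let $X=(x_1,\ldots,x_L,x_1,\ldots,x_L,\ldots)$ be a periodic sequence of positive reals with period $L$. Assume that for every $c\in[0,1]$ the limit $F_X(c):=\lim_{k\to\infty}F_X(k,c)$ exists and that $c\mapsto F_X(c)$ is continuous on $[0,1]$. Then $F_X(k,c)\to F_X(c)$ uniformly in $c\in[0,1]$ as $k\to\infty$.
   Context: For a sequence $X$ of positive reals and integers $1\le k\le n$, $S(X,n,k):=\binom{n}{k}^{-1}\sum_{1\le i_1<\cdots<i_k\le n}x_{i_1}\cdots x_{i_k}$. For $k\ge1$ and $c\in(0,1]$ set $F_X(k,c):=S(X,kL,\lceil ckL\rceil)^{1/\lceil ckL\rceil}$, and set $F_X(k,0):=(x_1+\cdots+x_L)/L$. *)

From HB Require Import structures.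
From mathcomp Require Import all_boot all_order all_algebra.
From mathcomp Require Import all_classical all_reals all_analysis.
Set Implicit Arguments. Unset Strict Implicit. Unset Printing Implicit Defensive.
Import Order.TTheory GRing.Theory Num.Theory.
Local Open Scope ring_scope.

(* The sequence X is given as x : nat -> R, 0-indexed: x 0 = x_1, x 1 = x_2, ...
   S(X,n,k) = binom(n,k)^{-1} * sum over k-subsets {i_1<...<i_k} of {1..n}
   of x_{i_1} ... x_{i_k}. *)
Definition S {R : realType} (x : nat -> R) (n k : nat) : R :=
  ('C(n, k)%:R)^-1 *
  \sum_(A : {set 'I_n} | #|A| == k) \prod_(i in A) x (nat_of_ord i).

Definition FX {R : realType} (x : nat -> R) (L k : nat) (c : R) : R :=
  if c == 0 then (\sum_(i < L) x i) / L%:R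
  else let m := `|Num.ceil (c * (k * L)%:R)|%N in
       powR (S x (k * L) m) (m%:R^-1).

From mathcomp Require Import all_boot all_order all_algebra.
From mathcomp Require Import all_classical all_reals all_analysis.
From mathcomp Require Import ring lra zify.

Set Implicit Arguments.
Unset Strict Implicit.
Unset Printing Implicit Defensive.

Import Order.TTheory GRing.Theory Num.Theory numFieldNormedType.Exports.
Local Open Scope ring_scope.

(* For c > 0, F_X(k, c) is the m-th root of the m-th symmetric mean E_m of
   x_1, ..., x_{kL}, with m = ceil(ckL), and F_X(k, 0) = E_1 by periodicity.
   Newton's inequalities E_{m-1} E_{m+1} <= E_m^2 give Maclaurin's inequalities
   E_{m+1}^(1/(m+1)) <= E_m^(1/m), so every F_X(k, .) is nonincreasing on [0, 1].
   Pointwise convergence of nonincreasing functions to a continuous limit on a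
   compact interval is uniform: near each c, F_X(k, .) is squeezed between its
   values at two nearby points where it is already close to the limit. *)

Section LiftSet.
Variable n : nat.

Definition lift_set (B : {set 'I_n}) : {set 'I_n.+1} := [set lift ord_max i | i in B].
Definition unlift_set (A : {set 'I_n.+1}) : {set 'I_n} := [set i | lift ord_max i \in A].

Lemma ord_max_notin_lift_set B : ord_max \notin lift_set B.
Proof. by apply/imsetP => -[i _ /eqP]; rewrite (negbTE (neq_lift _ _)). Qed.

Lemma card_lift_set B : #|lift_set B| = #|B|.
Proof. by rewrite card_imset //; apply: lift_inj. Qed.

Lemma lift_setK : cancel lift_set unlift_set.
Proof. by move=> B; apply/setP => i; rewrite inE mem_imset //; apply: lift_inj. Qed.

Lemma unlift_setK (A : {set 'I_n.+1}) : ord_max \notin A -> lift_set (unlift_set A) = A.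
Proof.
move=> nA; apply/setP => j; case: (unliftP ord_max j) => [i ->|->].
  by rewrite mem_imset ?inE //; apply: lift_inj.
by rewrite (negbTE nA) (negbTE (ord_max_notin_lift_set _)).
Qed.

Lemma prod_lift_set {R : comPzSemiRingType} (x : nat -> R) B :
  \prod_(i in lift_set B) x i = \prod_(i in B) x i.
Proof.
rewrite big_imset /=; last by move=> ? ? _ _; apply: lift_inj.
by apply: eq_bigr => i _; rewrite /bump leqNgt ltn_ord.
Qed.

Lemma unlift_setU1K (B : {set 'I_n}) : unlift_set (ord_max |: lift_set B) = B.
Proof.
apply/setP => i; rewrite inE in_setU1 eq_sym (negbTE (neq_lift _ _)) /=.
by rewrite mem_imset //; apply: lift_inj.
Qed.

Lemma setU1_unlift_setK (A : {set 'I_n.+1}) :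
  ord_max \in A -> ord_max |: lift_set (unlift_set A) = A.
Proof.
move=> mA; apply/setP => j; case: (unliftP ord_max j) => [i ->|->].
  by rewrite in_setU1 eq_sym (negbTE (neq_lift _ _)) mem_imset ?inE //; apply: lift_inj.
by rewrite setU11 mA.
Qed.

End LiftSet.

Section SplitOrdMax.
Variables (R : comPzSemiRingType) (x : nat -> R) (n : nat).

Lemma sum_sets_notin_ord_max k :
  \sum_(A : {set 'I_n.+1} | (#|A| == k) && (ord_max \notin A)) \prod_(i in A) x i =
  \sum_(B : {set 'I_n} | #|B| == k) \prod_(i in B) x i.
Proof.
rewrite (reindex (@lift_set n)) /=; last first.
  exists (@unlift_set n) => [B _|A]; first exact: lift_setK.
  by rewrite inE => /andP[_]; apply: unlift_setK.
apply: eq_big => [B|B _]; last exact: prod_lift_set.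
by rewrite card_lift_set ord_max_notin_lift_set andbT.
Qed.

Lemma sum_sets_in_ord_max k :
  \sum_(A : {set 'I_n.+1} | (#|A| == k.+1) && (ord_max \in A)) \prod_(i in A) x i =
  x n * \sum_(B : {set 'I_n} | #|B| == k) \prod_(i in B) x i.
Proof.
rewrite (reindex (fun B => ord_max |: lift_set B)) /=; last first.
  exists (@unlift_set n) => [B _|A]; first exact: unlift_setU1K.
  by rewrite inE => /andP[_]; apply: setU1_unlift_setK.
rewrite big_distrr; apply: eq_big => [B|B _].
  by rewrite cardsU1 ord_max_notin_lift_set card_lift_set setU11 andbT.
by rewrite big_setU1 ?ord_max_notin_lift_set //= prod_lift_set.
Qed.

End SplitOrdMax.

Section ElementarySymmetric.
Variables (R : comPzSemiRingType) (x : nat -> R).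

Fixpoint elem_sym (n k : nat) : R :=
  match n, k with
  | 0, 0 => 1
  | 0, _.+1 => 0
  | _.+1, 0 => 1
  | n.+1, k.+1 => elem_sym n k.+1 + x n * elem_sym n k
  end.

Lemma elem_sym0 n : elem_sym n 0 = 1.
Proof. by case: n. Qed.

Lemma elem_sym_small n k : (n < k)%N -> elem_sym n k = 0.
Proof. by elim: n k => [|n IH] [|k] //= lt_nk; rewrite !IH ?mulr0 ?addr0 // ltnW. Qed.

Lemma elem_sym1 n : elem_sym n 1 = \sum_(i < n) x i.
Proof. by elim: n => [|n IH]; rewrite ?big_ord0 // big_ord_recr /= IH elem_sym0 mulr1. Qed.

Lemma sum_card_set_prod_elem_sym n k :
  \sum_(A : {set 'I_n} | #|A| == k) \prod_(i in A) x i = elem_sym n k.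
Proof.
elim: n k => [|n IH] [|k].
- by rewrite (big_pred1 finset.set0) ?big_set0 // => A; rewrite cards_eq0.
- by rewrite big_pred0 // => A; rewrite (_ : A = finset.set0) ?cards0 //; apply/setP => -[].
- by rewrite elem_sym0 (big_pred1 finset.set0) ?big_set0 // => A; rewrite cards_eq0.
rewrite (bigID (fun A : {set 'I_n.+1} => ord_max \in A)) /= addrC.
by rewrite sum_sets_notin_ord_max sum_sets_in_ord_max !IH.
Qed.

End ElementarySymmetric.

Lemma newton_step_identity (R : comPzRingType) (t k y a0 a1 a2 a3 : R) :
  ((t + 1) * a2 + (k + 1) * y * a1) ^+ 2
    - ((t + 2) * a1 + k * y * a0) * (t * a3 + (k + 2) * y * a2)
  = t * (t + 2) * (a2 ^+ 2 - a1 * a3) + t * y * (k * (a1 * a2 - a0 * a3))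
    + (k + 2) * y ^+ 2 * (k * (a1 ^+ 2 - a0 * a2)) + (a2 - y * a1) ^+ 2.
Proof. by ring. Qed.

Lemma log_concave_gap (R : realFieldType) (a : nat -> R) j :
  (forall i, 0 <= a i) -> (forall i, a i * a i.+2 <= a i.+1 ^+ 2) ->
  0 < a j.+1 * a j.+2 -> a j * a j.+3 <= a j.+1 * a j.+2.
Proof.
move=> a_ge0 a_lc a12_gt0; rewrite -(ler_pM2r a12_gt0).
have := ler_pM (mulr_ge0 (a_ge0 j) (a_ge0 j.+2)) (mulr_ge0 (a_ge0 j.+1) (a_ge0 j.+3))
  (a_lc j) (a_lc j.+1).
have -> : a j * a j.+2 * (a j.+1 * a j.+3) = a j * a j.+3 * (a j.+1 * a j.+2) by ring.
by have -> : a j.+1 ^+ 2 * a j.+2 ^+ 2 = a j.+1 * a j.+2 * (a j.+1 * a j.+2) by ring.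
Qed.

Section SymmetricMean.
Variables (R : realFieldType) (x : nat -> R).
Hypothesis x_gt0 : forall i, 0 < x i.

Definition sym_mean n k := elem_sym x n k / 'C(n, k)%:R.

Lemma sym_mean0 n : sym_mean n 0 = 1.
Proof. by rewrite /sym_mean elem_sym0 bin0 divr1. Qed.

Lemma sym_mean_small n k : (n < k)%N -> sym_mean n k = 0.
Proof. by move=> lt_nk; rewrite /sym_mean elem_sym_small // mul0r. Qed.

Lemma elem_sym_ge0 n k : 0 <= elem_sym x n k.
Proof.
by elim: n k => [|n IH] [|k] //=; rewrite addr_ge0 ?mulr_ge0 ?IH ?ltW.
Qed.

Lemma elem_sym_gt0 n k : (k <= n)%N -> 0 < elem_sym x n k.
Proof.
by elim: n k => [|n IH] [|k] //= le_kn; rewrite ltr_wpDl ?elem_sym_ge0 // mulr_gt0 ?IH.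
Qed.

Lemma sym_mean_ge0 n k : 0 <= sym_mean n k.
Proof. by rewrite divr_ge0 ?elem_sym_ge0. Qed.

Lemma sym_mean_gt0 n k : (k <= n)%N -> 0 < sym_mean n k.
Proof. by move=> le_kn; rewrite divr_gt0 ?elem_sym_gt0 // ltr0n bin_gt0. Qed.

Lemma elem_symE n k : elem_sym x n k = sym_mean n k * 'C(n, k)%:R.
Proof.
have [le_kn|lt_nk] := leqP k n; last by rewrite bin_small // mulr0 elem_sym_small.
by rewrite divfK // pnatr_eq0 -lt0n bin_gt0.
Qed.

Lemma sym_meanS n j :
  n.+1%:R * sym_mean n.+1 j = (n.+1 - j)%:R * sym_mean n j + j%:R * x n * sym_mean n j.-1.
Proof.
case: j => [|k]; first by rewrite !sym_mean0 subn0 !mulr1 mul0r addr0.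
have [le_kn|lt_nk] := leqP k n; last by rewrite !sym_mean_small ?mulr0 ?addr0 // ltnW.
have C_neq0 : 'C(n.+1, k.+1)%:R != 0 :> R by rewrite pnatr_eq0 -lt0n bin_gt0.
have down : n.+1%:R * 'C(n, k.+1)%:R = (n - k)%:R * 'C(n.+1, k.+1)%:R :> R.
  by rewrite -!natrM (mul_bin_down n.+1 k.+1).
have diag : n.+1%:R * 'C(n, k)%:R = k.+1%:R * 'C(n.+1, k.+1)%:R :> R.
  by rewrite -!natrM (mul_bin_diag n.+1 k).
apply: (mulIf C_neq0); rewrite -[LHS]mulrA -elem_symE /= !elem_symE.
transitivity (sym_mean n k.+1 * (n.+1%:R * 'C(n, k.+1)%:R)
              + x n * sym_mean n k * (n.+1%:R * 'C(n, k)%:R)); first by ring.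
by rewrite down diag subSS; ring.
Qed.

Lemma newton_sym_mean n k : sym_mean n k * sym_mean n k.+2 <= sym_mean n k.+1 ^+ 2.
Proof.
elim: n k => [|n IH] k; first by rewrite (@sym_mean_small 0 k.+2) // mulr0 sqr_ge0.
have [lt_n1k2|le_k2n1] := ltnP n.+1 k.+2.
  by rewrite (sym_mean_small lt_n1k2) mulr0 sqr_ge0.
set a := sym_mean n; set y := x n.
have a_ge0 j : 0 <= a j by apply: sym_mean_ge0.
have y_ge0 : 0 <= y by exact/ltW/x_gt0.
have gap1 : 0 <= k%:R * (a k ^+ 2 - a k.-1 * a k.+1).
  by case: k {le_k2n1} => [|k]; rewrite ?mul0r // mulr_ge0 // subr_ge0 IH.
have gap2 : 0 <= k%:R * (a k * a k.+1 - a k.-1 * a k.+2).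
  case: k le_k2n1 {gap1} => [|k] le_k2n1; first by rewrite mul0r.
  rewrite mulr_ge0 // subr_ge0 /=.
  have [lt_nk3|le_k3n] := ltnP n k.+3.
    by rewrite /a (sym_mean_small lt_nk3) mulr0 mulr_ge0.
  by apply: log_concave_gap => //; rewrite mulr_gt0 // sym_mean_gt0 // ltnW.
have n1_gt0 : 0 < n.+1%:R :> R by rewrite ltr0n.
rewrite -(ler_pM2l (mulr_gt0 n1_gt0 n1_gt0)) -subr_ge0.
have -> : n.+1%:R * n.+1%:R * (sym_mean n.+1 k * sym_mean n.+1 k.+2)
  = (n.+1%:R * sym_mean n.+1 k) * (n.+1%:R * sym_mean n.+1 k.+2) by ring.
have -> : n.+1%:R * n.+1%:R * sym_mean n.+1 k.+1 ^+ 2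
  = (n.+1%:R * sym_mean n.+1 k.+1) ^+ 2 by ring.
rewrite !sym_meanS -/a -/y /=.
have -> : (n.+1 - k = (n - k.+1).+2)%N by lia.
have -> : (n.+1 - k.+1 = (n - k.+1).+1)%N by lia.
have -> : (n.+1 - k.+2 = n - k.+1)%N by lia.
set t := (n - k.+1)%N.
have natS2 m : m.+2%:R = m%:R + 2 :> R by rewrite -addn2 natrD.
rewrite -[t.+1%:R]natr1 -[k.+1%:R]natr1 (natS2 t) (natS2 k) newton_step_identity.
apply: addr_ge0; last exact: sqr_ge0.
apply: addr_ge0; last by apply: mulr_ge0 gap1; rewrite mulr_ge0 ?sqr_ge0 ?addr_ge0.
apply: addr_ge0; last by apply: mulr_ge0 gap2; rewrite mulr_ge0.
by rewrite mulr_ge0 ?subr_ge0 ?IH // mulr_ge0 ?addr_ge0.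
Qed.

Lemma maclaurin_sym_mean n m : sym_mean n m.+1 ^+ m <= sym_mean n m ^+ m.+1.
Proof.
elim: m => [|m IH]; first by rewrite sym_mean0.
have [lt_nm2|le_m2n] := ltnP n m.+2.
  by rewrite (sym_mean_small lt_nm2) expr0n exprn_ge0 // sym_mean_ge0.
have Em_gt0 j : (j <= m.+2)%N -> 0 < sym_mean n j.
  by move=> le_jm2; rewrite sym_mean_gt0 // (leq_trans le_jm2).
rewrite -(ler_pM2l (exprn_gt0 m.+1 (Em_gt0 m (leqW (leqnSn m))))).
apply: (@le_trans _ _ ((sym_mean n m.+1 ^+ 2) ^+ m.+1)).
  rewrite -exprMn; apply: lerXn2r; last exact: newton_sym_mean.
    by rewrite nnegrE mulr_ge0 ?sym_mean_ge0.
  by rewrite nnegrE sqr_ge0.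
rewrite -exprM (_ : (2 * m.+1 = m.+2 + m)%N); last by lia.
rewrite exprD mulrC.
by rewrite ler_pM2r ?exprn_gt0 ?Em_gt0 // ltnW.
Qed.

End SymmetricMean.

Section SymmetricMeanRoot.
Variables (R : realType) (x : nat -> R).
Hypothesis x_gt0 : forall i, 0 < x i.

Lemma sym_mean_rootS n m : (0 < m)%N ->
  sym_mean x n m.+1 `^ m.+1%:R^-1 <= sym_mean x n m `^ m%:R^-1.
Proof.
move=> m_gt0.
have m_neq0 : m%:R != 0 :> R by rewrite pnatr_eq0 -lt0n.
have r_ge0 : 0 <= (m%:R * m.+1%:R)^-1 :> R by rewrite invr_ge0 mulr_ge0.
have := ge0_ler_powR r_ge0 _ _ (maclaurin_sym_mean x_gt0 n m).
rewrite !nnegrE !exprn_ge0 ?sym_mean_ge0 // => /(_ isT isT).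
rewrite -!powR_mulrn ?sym_mean_ge0 // -!powRrM.
have m1_neq0 : m.+1%:R != 0 :> R by rewrite pnatr_eq0.
by rewrite invfM mulVKf // mulrCA divff // mulr1.
Qed.

Lemma sym_mean_root_antitone n a b : (0 < a)%N -> (a <= b)%N ->
  sym_mean x n b `^ b%:R^-1 <= sym_mean x n a `^ a%:R^-1.
Proof.
move=> a_gt0; elim: b => [|b IH]; first by rewrite leqn0 => /eqP a0; rewrite a0 in a_gt0.
rewrite leq_eqVlt => /predU1P[<- //|lt_ab].
exact: le_trans (sym_mean_rootS _ (leq_trans a_gt0 lt_ab)) (IH lt_ab).
Qed.

End SymmetricMeanRoot.

Lemma S_sym_mean (R : realType) (x : nat -> R) n k : S x n k = sym_mean x n k.
Proof. by rewrite /S /sym_mean sum_card_set_prod_elem_sym mulrC. Qed.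

Definition ceil_mul (R : archiNumDomainType) (c : R) (n : nat) : nat := `|Num.ceil (c * n%:R)|%N.

Lemma ceil_mul_gt0 (R : archiNumDomainType) (c : R) n :
  0 < c -> (0 < n)%N -> (0 < ceil_mul c n)%N.
Proof. by move=> c_gt0 n_gt0; rewrite absz_gt0 gt_eqF // ceil_gt0 mulr_gt0 ?ltr0n. Qed.

Lemma ceil_mul_le (R : archiRealDomainType) (c1 c2 : R) n :
  0 <= c1 -> c1 <= c2 -> (ceil_mul c1 n <= ceil_mul c2 n)%N.
Proof.
move=> c1_ge0 le_c12; have le_ceil12 : Num.ceil (c1 * n%:R) <= Num.ceil (c2 * n%:R).
  by apply: le_ceil; rewrite ler_wpM2r.
have ceil1_ge0 : 0 <= Num.ceil (c1 * n%:R).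
  by rewrite ceil_ge0 (@lt_le_trans _ _ 0) ?ltrN10 ?mulr_ge0.
rewrite /ceil_mul; move: (Num.ceil _) (Num.ceil _) ceil1_ge0 le_ceil12 => m1 m2; lia.
Qed.

Section FXMonotone.
Variables (R : realType) (x : nat -> R) (L : nat).
Hypotheses (L_gt0 : (0 < L)%N) (x_gt0 : forall i, 0 < x i).
Hypothesis x_periodic : forall i, x (i + L)%N = x i.

Lemma periodic_mulnD k i : x (k * L + i)%N = x i.
Proof. by elim: k => [|k IH] //; rewrite mulSnr -addnA (addnC L) addnA x_periodic. Qed.

Lemma sum_periodic k : \sum_(i < k * L) x i = k%:R * \sum_(i < L) x i.
Proof.
elim: k => [|k IH]; first by rewrite mul0n big_ord0 mul0r.
rewrite mulSnr big_split_ord IH.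
under eq_bigr => i _ do rewrite periodic_mulnD.
by rewrite -addn1 natrD mulrDl mul1r.
Qed.

Lemma FX0E k : (0 < k)%N -> FX x L k 0 = sym_mean x (k * L) 1.
Proof.
move=> k_gt0; rewrite /FX eqxx /sym_mean elem_sym1 sum_periodic bin1 natrM.
have k_neq0 : k%:R != 0 :> R by rewrite pnatr_eq0 -lt0n.
by rewrite -mulf_div divff ?mul1r.
Qed.

Lemma FX_gt0E k c : 0 < c ->
  FX x L k c = sym_mean x (k * L) (ceil_mul c (k * L)) `^ (ceil_mul c (k * L))%:R^-1.
Proof. by move=> c_gt0; rewrite /FX gt_eqF // S_sym_mean. Qed.

Lemma FX_antitone k c1 c2 : (0 < k)%N -> 0 <= c1 -> c1 <= c2 ->
  FX x L k c2 <= FX x L k c1.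
Proof.
move=> k_gt0 c1_ge0 le_c12; have kL_gt0 : (0 < k * L)%N by rewrite muln_gt0 k_gt0.
have [c1_0|c1_neq0] := eqVneq c1 0.
  have [c2_0|c2_neq0] := eqVneq c2 0; first by rewrite c1_0 c2_0.
  have c2_gt0 : 0 < c2 by rewrite lt_neqAle eq_sym c2_neq0 -c1_0.
  have := sym_mean_root_antitone x_gt0 (k * L) (ltnSn 0) (ceil_mul_gt0 c2_gt0 kL_gt0).
  by rewrite c1_0 FX0E // FX_gt0E // invr1 powRr1 // sym_mean_ge0.
have c1_gt0 : 0 < c1 by rewrite lt_neqAle eq_sym c1_neq0.
rewrite !FX_gt0E ?(lt_le_trans c1_gt0) //.
exact: sym_mean_root_antitone (ceil_mul_gt0 c1_gt0 kL_gt0) (ceil_mul_le _ c1_ge0 le_c12).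
Qed.

End FXMonotone.

Lemma itv_ball_bracket (R : realFieldType) (a b c r : R) : a <= c <= b -> 0 < r ->
  exists c1 c2, [/\ a <= c1 <= b, a <= c2 <= b, `|c - c1| < r, `|c - c2| < r &
    forall y, a <= y <= b -> `|c - y| < r / 2 -> c1 <= y <= c2].
Proof.
move=> /andP[le_ac le_cb] r_gt0.
have [c1 [c1_ab c1_near c1_le]] : exists c1, [/\ a <= c1 <= b, `|c - c1| < r &
    forall y, a <= y -> c - r / 2 < y -> c1 <= y].
  have [le_ac1|lt_c1a] := lerP a (c - r / 2).
  - by exists (c - r / 2); split => [||y]; rewrite ?ger0_norm; lra.
  - by exists a; split => [||y]; rewrite ?ger0_norm; lra.
have [c2 [c2_ab c2_near c2_ge]] : exists c2, [/\ a <= c2 <= b, `|c - c2| < r &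
    forall y, y <= b -> y < c + r / 2 -> y <= c2].
  have [le_c2b|lt_bc2] := lerP (c + r / 2) b.
  - by exists (c + r / 2); split => [||y]; rewrite ?ler0_norm; lra.
  - by exists b; split => [||y]; rewrite ?ler0_norm; lra.
exists c1, c2; split => // y /andP[le_ay le_yb]; rewrite ltr_norml => /andP[? ?].
by rewrite c1_le ?c2_ge //; lra.
Qed.

Section AntitoneUniformConvergence.
Local Open Scope classical_set_scope.
Variables (R : realType) (a b : R) (f : nat -> R -> R) (F : R -> R).
Hypothesis f_antitone :
  \forall k \near \oo, forall u v, a <= u -> u <= v -> v <= b -> f k v <= f k u.
Hypothesis f_cvg : forall c, a <= c <= b -> f ^~ c @ \oo --> F c.
Hypothesis F_cont : {within `[a, b], continuous F}.

Lemma continuous_within_itv_ball c (e : R) : a <= c <= b -> 0 < e ->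
  exists2 d : R, 0 < d & forall y, a <= y <= b -> `|c - y| < d -> `|F c - F y| < e.
Proof.
move=> c_ab e_gt0.
have c_in : `[a, b] c by rewrite /= in_itv.
have F_c : F @ within `[a, b] (nbhs c) --> F c.
  move: F_cont; rewrite continuous_subspace_in => /(_ c); rewrite inE => /(_ c_in).
  by rewrite (nbhs_subspace_in c_in).
have /(_ (within_filter _ _)) := cvgr_dist_lt _ _ F_c _ e_gt0.
rewrite near_withinE => /nbhs_ballP[d /= d_gt0 F_d].
by exists d => // y y_ab c_y; apply: F_d; rewrite //= in_itv.
Qed.

Lemma antitone_cvg_near c (e : R) : a <= c <= b -> 0 < e ->
  \forall c' \near c & k \near \oo, a <= c' <= b -> `|f k c' - F c'| < e.
Proof.
move=> c_ab e_gt0; have e3_gt0 : 0 < e / 3 by rewrite divr_gt0.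
have [d d_gt0 F_d] := continuous_within_itv_ball c_ab e3_gt0.
have [c1 [c2 [c1_ab c2_ab c1_d c2_d c12]]] := itv_ball_bracket c_ab d_gt0.
exists (ball c (d / 2), [set k |
    [/\ forall u v, a <= u -> u <= v -> v <= b -> f k v <= f k u,
         `|F c1 - f k c1| < e / 3 & `|F c2 - f k c2| < e / 3]]).
  split; first by apply: nbhsx_ballx; rewrite divr_gt0.
  near=> k; split; near: k; first exact: f_antitone.
    exact: cvgr_dist_lt (f_cvg c1_ab) _ e3_gt0.
  exact: cvgr_dist_lt (f_cvg c2_ab) _ e3_gt0.
case=> c' k /= [c_c' [f_anti f1 f2]] c'_ab.
have /andP[le_c1c' le_c'c2] := c12 _ c'_ab c_c'.
have f_c'_le := f_anti _ _ (proj1 (andP c1_ab)) le_c1c' (proj2 (andP c'_ab)).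
have f_c'_ge := f_anti _ _ (proj1 (andP c'_ab)) le_c'c2 (proj2 (andP c2_ab)).
have F1 := F_d _ c1_ab c1_d; have F2 := F_d _ c2_ab c2_d.
have F' : `|F c - F c'| < e / 3 by apply: F_d => //; apply: lt_trans c_c' _; lra.
move: F1 F2 F' f1 f2; rewrite !ltr_norml.
move=> /andP[? ?] /andP[? ?] /andP[? ?] /andP[? ?] /andP[? ?].
by apply/andP; split; lra.
Unshelve. all: end_near.
Qed.

Lemma antitone_cvg_uniform (e : R) : 0 < e ->
  \forall k \near \oo, forall c, a <= c <= b -> `|f k c - F c| < e.
Proof.
move=> e_gt0; have ab_compact : compact `[a, b] := @segment_compact R a b.
have cover := (near_covering_withinP _).2 ((compact_near_coveringP _).1 ab_compact).
apply: filterS (cover _ _ (fun k c => `|f k c - F c| < e) _ _) => [k f_close c c_ab|c c_ab].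
  by apply: f_close; rewrite /= in_itv.
apply: filterS (antitone_cvg_near _ e_gt0) => [[c' k] /= f_close c'_ab|].
  by apply: f_close; rewrite /= in_itv in c'_ab.
by rewrite /= in_itv in c_ab.
Qed.

End AntitoneUniformConvergence.

Local Open Scope classical_set_scope.

Theorem proposition4p3 (R : realType) (L : nat) (x : nat -> R) (F : R -> R) :
  (0 < L)%N ->
  (forall i, 0 < x i) ->
  (forall i, x (i + L)%N = x i) ->
  (forall c : R, 0 <= c <= 1 -> (fun k : nat => FX x L k c) @ \oo --> F c) ->
  {within `[0, 1], continuous F} ->
  forall e : R, 0 < e ->
    \forall k \near \oo, forall c : R, 0 <= c <= 1 -> `|FX x L k c - F c| < e.
Proof.
move=> L_gt0 x_gt0 x_periodic FX_cvg F_cont.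
apply: (@antitone_cvg_uniform R 0 1 (FX x L) F) FX_cvg F_cont.
near=> k => u v u_ge0 le_uv _; apply: FX_antitone => //.
near: k; exact: nbhs_infty_gt.
Unshelve. all: end_near.
Qed.
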